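(* The homomorphism $C_2^{\rm lb}(X)\to\mathbb Z_p$ defined on generators by \[ ((a,b),(a,c))\longmapsto (a-b)\,\frac{(a-b+2c)^p+(a+b)^p-2(a+c)^p}{p} \] (computed with integer lifts of $a,b,c$, the numerator in $\mathbb Z$ being divisible by $p$, then reduced mod $p$) vanishes on $D_2^{\rm lb}(X)+D_2^{\rm lb}(X,\rho)$, and the induced homomorphism $\theta_p:C_2^{\rm SLB}(X)\to\mathbb Z_p$ is a $2$-cocycle, i.e. $\theta_p\circ\partial_3^{\rm SLB}=0$.
   Context: Let $p$ be an odd prime, $X=\mathbb Z_p$, and $[a,b,c]=a-b+c$. Let $\rho((a,b))=(b,a)$, $(a,b)\,\underline{\star}\,(a,c)=(c,[a,b,c])$, $(a,b)\,\overline{\star}\,(a,c)=(c,[a,c,b])$. For $n\ge1$ let $C_n^{\rm lb}(X)$ be the free abelian group on tuples $((a,b_1),\dots,(a,b_n))$, $a,b_i\in X$ ($C_n^{\rm lb}=0$ for $n\le0$), with boundary for $n\ge2$ \[ \partial_n^{\rm lb}((a,b_1),\dots,(a,b_n))=\sum_{i=1}^n(-1)^i\Big\{((a,b_1),\dots,\widehat{(a,b_i)},\dots,(a,b_n))-\big((b_i,[a,b_1,b_i]),\dots,(b_i,[a,b_{i-1},b_i]),(b_i,[a,b_i,b_{i+1}]),\dots,(b_i,[a,b_i,b_n])\big)\Big\} \] and $\partial_n^{\rm lb}=0$ for $n\le1$. Let $D_n^{\rm lb}(X)$ be generated by tuples with $b_i=b_{i+1}$ for some $i$, and $D_n^{\rm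 lb}(X,\rho)$ generated by all $((a,b_1),\dots,(a,b_n))+((a,b_1)\underline\star(a,b_i),\dots,(a,b_{i-1})\underline\star(a,b_i),\rho((a,b_i)),(a,b_{i+1})\overline\star(a,b_i),\dots,(a,b_n)\overline\star(a,b_i))$. Both are subcomplexes, and $C_n^{\rm SLB}(X)=C_n^{\rm lb}(X)/(D_n^{\rm lb}(X)+D_n^{\rm lb}(X,\rho))$ with the induced boundary $\partial_n^{\rm SLB}$ is a chain complex. *)

From HB Require Import structures.
From mathcomp Require Import all_boot all_order all_algebra.
Set Implicit Arguments. Unset Strict Implicit. Unset Printing Implicit Defensive.
Import Order.TTheory GRing.Theory Num.Theory.
Local Open Scope ring_scope.

(* X = Z_p, a generator ((a,b_1),...,(a,b_n)) of C_n^lb(X) is encoded as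
   (a, bs) with bs : {ffun 'I_n -> X}, bs i = b_{i+1} (0-based indices). *)
Definition gen_t (p n : nat) := ('Z_p * {ffun 'I_n -> 'Z_p})%type.

(* C_n^lb(X): X is finite, so the free abelian group on the generators is
   the group of all integer-valued functions on the generators. *)
Definition chain (p n : nat) := {ffun gen_t p n -> int}.

Definition gen (p n : nat) (g : gen_t p n) : chain p n :=
  [ffun h => ((h == g) : nat)%:Z].

Definition br (p : nat) (a b c : 'Z_p) : 'Z_p := a - b + c.

Definition del (p n : nat) (bs : {ffun 'I_n -> 'Z_p}) (i : 'I_n)
  : {ffun 'I_n.-1 -> 'Z_p} := [ffun j => bs (lift i j)].

Definition face2 (p n : nat) (a : 'Z_p) (bs : {ffun 'I_n -> 'Z_p}) (i : 'I_n)
  : {ffun 'I_n.-1 -> 'Z_p} :=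
  [ffun j : 'I_n.-1 => let k := lift i j in
             if (k < i)%N then br a (bs k) (bs i) else br a (bs i) (bs k)].

(* boundary of a generator (paper's index i+1 gives sign (-1)^(i+1)) *)
Definition bd_gen (p n : nat) (g : gen_t p n) : chain p n.-1 :=
  \sum_(i < n)
     (gen (g.1, del g.2 i) - gen (g.2 i, face2 g.1 g.2 i)) *~ ((-1) ^+ i.+1).

Definition bd (p n : nat) (c : chain p n) : chain p n.-1 :=
  if (2 <= n)%N then \sum_(g : gen_t p n) bd_gen g *~ c g else 0.

(* D_n^lb(X): subgroup generated by the generators with b_i = b_{i+1} for
   some i; i.e. chains supported on such generators. *)
Definition degenerate (p n : nat) (g : gen_t p n) : bool :=
  [exists i : 'I_n, exists j : 'I_n, (j == i.+1 :> nat) && (g.2 i == g.2 j)].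

Definition inD (p n : nat) (c : chain p n) : Prop :=
  forall g, c g != 0 -> degenerate g.

(* generators of D_n^lb(X,rho): for (a, bs) and i,
   ((a,b_1),...,(a,b_n)) +
   ((a,b_1)*_(a,b_i),...,(a,b_{i-1})*_(a,b_i), rho(a,b_i),
    (a,b_{i+1})*^(a,b_i),...,(a,b_n)*^(a,b_i))
   where (a,b)*_(a,c) = (c,[a,b,c]), (a,b)*^(a,c) = (c,[a,c,b]),
   rho(a,b) = (b,a). *)
Definition rho_tuple (p n : nat) (a : 'Z_p) (bs : {ffun 'I_n -> 'Z_p}) (i : 'I_n)
  : {ffun 'I_n -> 'Z_p} :=
  [ffun j : 'I_n => if (j < i)%N then br a (bs j) (bs i)
             else if j == i then a else br a (bs i) (bs j)].

Definition rho_gen (p n : nat) (x : gen_t p n * 'I_n) : chain p n :=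
  gen x.1 + gen (x.1.2 x.2, rho_tuple x.1.1 x.1.2 x.2).

Definition inDrho (p n : nat) (c : chain p n) : Prop :=
  exists k : {ffun (gen_t p n * 'I_n) -> int},
    c = \sum_(x : gen_t p n * 'I_n) rho_gen x *~ k x.

Definition num (p : nat) (a b c : int) : int :=
  (a - b + 2 * c) ^+ p + (a + b) ^+ p - 2 * (a + c) ^+ p.

Definition theta_int (p : nat) (a b c : int) : 'Z_p :=
  ((a - b) * (num p a b c %/ p)%Z)%:~R.

Definition theta_val (p : nat) (a b c : 'Z_p) : 'Z_p :=
  theta_int p (val a)%:Z (val b)%:Z (val c)%:Z.

Definition theta_gen (p : nat) (g : gen_t p 2) : 'Z_p :=
  theta_val g.1 (g.2 ord0) (g.2 ord_max).

Definition theta (p : nat) (c : chain p 2) : 'Z_p :=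
  \sum_(g : gen_t p 2) (c g)%:~R * theta_gen g.

From HB Require Import structures.
From mathcomp Require Import all_boot all_order all_algebra.
From mathcomp Require Import ring zify.
Import GRing.Theory.
Local Open Scope ring_scope.

(* Fermat's little theorem makes the numerator vanish mod p, and as x = y (mod p)
   implies x^p = y^p (mod p^2), its quotient by p is well defined mod p on residues.
   The rest are identities between integer polynomials: the substitutions generating
   D_2(X,rho) permute the three linear forms a-b+2c, a+b, a+c of the numerator while
   negating a-b, and theta o d_3 vanishes identically on integer lifts already before
   the division by p. *)

(* theta o d_3 on ((a,b0),(a,b1),(a,b2)), up to sign, for theta given on generators by f *)
Definition coboundary3 {R S : zmodType} (f : R -> R -> R -> S) (a b0 b1 b2 : R) : S :=
  f a b1 b2 - f b0 (a - b0 + b1) (a - b0 + b2)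
  - (f a b0 b2 - f b1 (a - b0 + b1) (a - b1 + b2))
  + (f a b0 b1 - f b2 (a - b0 + b2) (a - b1 + b2)).

Section NumeratorIdentities.
Variable p : nat.

Lemma num_diag (a b : int) : num p a b b = 0.
Proof.
rewrite /num; have -> : a - b + 2 * b = a + b by ring.
ring.
Qed.

Lemma num_rho1 (a b c : int) : num p b a (a - b + c) = num p a b c.
Proof.
rewrite /num; have -> : b - a + 2 * (a - b + c) = a - b + 2 * c by ring.
have -> : b + (a - b + c) = a + c by ring.
by rewrite (addrC b).
Qed.

Lemma num_rho2 (a b c : int) : num p c (a - b + c) a = num p a b c.
Proof.
rewrite /num; have -> : c - (a - b + c) + 2 * a = a + b by ring.
have -> : c + (a - b + c) = a - b + 2 * c by ring.
by rewrite (addrC c) [(a + b) ^+ p + _]addrC.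
Qed.

Lemma coboundary3_num (a b0 b1 b2 : int) :
  coboundary3 (fun a b c => (a - b) * num p a b c) a b0 b1 b2 = 0.
Proof.
rewrite /coboundary3 /num.
have -> : b0 - (a - b0 + b1) + 2 * (a - b0 + b2) = a - b1 + 2 * b2 by ring.
have -> : b0 + (a - b0 + b1) = a + b1 by ring.
have -> : b0 + (a - b0 + b2) = a + b2 by ring.
have -> : b1 - (a - b0 + b1) + 2 * (a - b1 + b2) = a + b0 - 2 * b1 + 2 * b2 by ring.
have -> : b1 + (a - b0 + b1) = a - b0 + 2 * b1 by ring.
have -> : b1 + (a - b1 + b2) = a + b2 by ring.
have -> : b2 - (a - b0 + b2) + 2 * (a - b1 + b2) = a + b0 - 2 * b1 + 2 * b2 by ring.
have -> : b2 + (a - b0 + b2) = a - b0 + 2 * b2 by ring.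
have -> : b2 + (a - b1 + b2) = a - b1 + 2 * b2 by ring.
ring.
Qed.

Definition numq (a b c : int) : int := (num p a b c %/ p)%Z.

Definition thetaZ (a b c : int) : int := (a - b) * numq a b c.

Lemma thetaZ_diag (a b : int) : thetaZ a b b = 0.
Proof. by rewrite /thetaZ /numq num_diag div0z mulr0. Qed.

Lemma thetaZ_rho1 (a b c : int) : thetaZ b a (a - b + c) = - thetaZ a b c.
Proof. by rewrite /thetaZ /numq num_rho1 -mulNr opprB. Qed.

Lemma thetaZ_rho2 (a b c : int) : thetaZ c (a - b + c) a = - thetaZ a b c.
Proof. by rewrite /thetaZ /numq num_rho2 -mulNr; congr (_ * _); ring. Qed.

End NumeratorIdentities.

Section ModularArithmetic.
Variable p : nat.
Hypothesis p_prime : prime p.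

Lemma pchar_Zp_prime : p \in [pchar 'Z_p].
Proof. by rewrite inE p_prime pchar_Zp ?prime_gt1. Qed.

Lemma intr_Zp_eq (u v : int) : (u%:~R == v%:~R :> 'Z_p) = (p %| u - v)%Z.
Proof. by rewrite -subr_eq0 -intrB (dvdz_pcharf pchar_Zp_prime). Qed.

Lemma intr_Zp_exprp (u : int) : (u ^+ p)%:~R = u%:~R :> 'Z_p.
Proof.
by rewrite rmorphXn -(pFrobenius_autE pchar_Zp_prime) pFrobenius_aut_int.
Qed.

Lemma p_neq0 : p%:Z != 0.
Proof. by rewrite eqz_nat -lt0n prime_gt0. Qed.

Lemma num_dvdp (a b c : int) : (p %| num p a b c)%Z.
Proof.
rewrite -[num _ _ _ _]subr0 -intr_Zp_eq /num.
by rewrite !(intrD, intrN, intrM, intr_Zp_exprp) rmorph0; apply/eqP; ring.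
Qed.

(* x^p - y^p = (x - y) * sum_(i < p) x^(p-1-i) y^i, and mod p the sum is p y^(p-1). *)
Lemma dvdz_subXX (x y : int) :
  x%:~R = y%:~R :> 'Z_p -> (p%:Z * p%:Z %| x ^+ p - y ^+ p)%Z.
Proof.
move=> xy; rewrite subrXX dvdz_mul //; first by rewrite -intr_Zp_eq xy.
rewrite -[\sum_(i < p) _]subr0 -intr_Zp_eq rmorph_sum /=.
have p_gt0 := prime_gt0 p_prime.
under eq_bigr => i _.
  rewrite rmorphM !rmorphXn /= xy -exprD subnK; last by have := ltn_ord i; lia.
  over.
by rewrite sumr_const card_ord -mulr_natr pchar_Zp ?prime_gt1 // mulr0.
Qed.

Lemma numqE (a b c : int) : num p a b c = numq p a b c * p.
Proof. by rewrite divzK ?num_dvdp. Qed.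

Lemma numq_modp {a b c a' b' c' : int} :
  a%:~R = a'%:~R :> 'Z_p -> b%:~R = b'%:~R :> 'Z_p -> c%:~R = c'%:~R :> 'Z_p ->
  (numq p a b c)%:~R = (numq p a' b' c')%:~R :> 'Z_p.
Proof.
move=> ha hb hc.
apply/eqP; rewrite intr_Zp_eq -(dvdz_mul2r p_neq0) mulrBl -!numqE.
have -> : num p a b c - num p a' b' c' =
   ((a - b + 2 * c) ^+ p - (a' - b' + 2 * c') ^+ p) + ((a + b) ^+ p - (a' + b') ^+ p)
   - 2 * ((a + c) ^+ p - (a' + c') ^+ p) by rewrite /num; ring.
apply: rpredB; [apply: rpredD | apply: dvdz_mull]; apply: dvdz_subXX;
  by rewrite !(intrD, intrN, intrM) ?ha ?hb ?hc.
Qed.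

Lemma coboundary3_thetaZ (a b0 b1 b2 : int) : coboundary3 (thetaZ p) a b0 b1 b2 = 0.
Proof.
apply: (mulIf p_neq0); rewrite mul0r -(coboundary3_num p a b0 b1 b2).
by rewrite /coboundary3 /thetaZ /= !numqE; ring.
Qed.

Lemma Zp_intr_surj (x : 'Z_p) : exists a : int, x = a%:~R.
Proof. by exists (val x)%:Z; apply/esym/natr_Zp. Qed.

Lemma theta_int_modp (a b c a' b' c' : int) :
  a%:~R = a'%:~R :> 'Z_p -> b%:~R = b'%:~R :> 'Z_p -> c%:~R = c'%:~R :> 'Z_p ->
  theta_int p a b c = theta_int p a' b' c'.
Proof.
move=> ha hb hc; rewrite /theta_int !intrM !intrB ha hb.
by rewrite (numq_modp ha hb hc).
Qed.

Lemma theta_val_intr (a b c : int) :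
  theta_val (a%:~R : 'Z_p) b%:~R c%:~R = (thetaZ p a b c)%:~R.
Proof. by apply: theta_int_modp; apply: natr_Zp. Qed.

Lemma br_intr (a b c : int) : br (a%:~R : 'Z_p) b%:~R c%:~R = (a - b + c)%:~R.
Proof. by rewrite /br intrD intrB. Qed.

Lemma coboundary3_intr {f : int -> int -> int -> int} {g : 'Z_p -> 'Z_p -> 'Z_p -> 'Z_p} :
  (forall a b c, g a%:~R b%:~R c%:~R = (f a b c)%:~R) ->
  forall a b0 b1 b2 : int,
  coboundary3 g a%:~R b0%:~R b1%:~R b2%:~R = (coboundary3 f a b0 b1 b2)%:~R.
Proof.
move=> gf a b0 b1 b2.
by rewrite /coboundary3 !(intrD, intrN) -!gf !(intrD, intrN).
Qed.

Lemma theta_val_diag (x y : 'Z_p) : theta_val x y y = 0.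
Proof.
case: (Zp_intr_surj x) (Zp_intr_surj y) => [a ->] [b ->].
by rewrite theta_val_intr thetaZ_diag.
Qed.

Lemma theta_val_rho1 (x y z : 'Z_p) : theta_val y x (br x y z) = - theta_val x y z.
Proof.
case: (Zp_intr_surj x) (Zp_intr_surj y) (Zp_intr_surj z) => [a ->] [b ->] [c ->].
by rewrite br_intr !theta_val_intr thetaZ_rho1 intrN.
Qed.

Lemma theta_val_rho2 (x y z : 'Z_p) : theta_val z (br x y z) x = - theta_val x y z.
Proof.
case: (Zp_intr_surj x) (Zp_intr_surj y) (Zp_intr_surj z) => [a ->] [b ->] [c ->].
by rewrite br_intr !theta_val_intr thetaZ_rho2 intrN.
Qed.

Lemma coboundary3_theta_val (a b0 b1 b2 : 'Z_p) : coboundary3 (@theta_val p) a b0 b1 b2 = 0.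
Proof.
case: (Zp_intr_surj a) (Zp_intr_surj b0) (Zp_intr_surj b1) (Zp_intr_surj b2)
  => [A ->] [B0 ->] [B1 ->] [B2 ->].
by rewrite (coboundary3_intr theta_val_intr) coboundary3_thetaZ.
Qed.

End ModularArithmetic.

Lemma theta_nmod_morphism (p : nat) : nmod_morphism (@theta p).
Proof.
split=> [|c d]; rewrite /theta.
  by rewrite big1 // => g _; rewrite ffunE mul0r.
by rewrite -big_split; apply: eq_bigr => g _; rewrite ffunE intrD mulrDl.
Qed.

HB.instance Definition _ (p : nat) :=
  GRing.isNmodMorphism.Build (chain p 2) 'Z_p (@theta p) (theta_nmod_morphism p).

Section Chains.
Variable p : nat.

Lemma theta_gen_basis (g : gen_t p 2) : theta (gen g) = theta_gen g.
Proof.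
rewrite /theta (bigD1 g) //= big1 => [|h hg]; rewrite !ffunE ?eqxx ?mul1r ?addr0 //.
by rewrite (negbTE hg) mul0r.
Qed.

Lemma theta_eq0 (c : chain p 2) :
  (forall g, c g != 0 -> theta_gen g = 0) -> theta c = 0.
Proof.
move=> c0; rewrite /theta big1 // => g _.
by have [->|/c0 ->] := eqVneq (c g) 0; rewrite ?mul0r ?mulr0.
Qed.

Lemma theta_bd_gen3 (a : 'Z_p) (bs : {ffun 'I_3 -> 'Z_p}) :
  theta (bd_gen (a, bs)) =
  - coboundary3 (@theta_val p) a (bs (inord 0)) (bs (inord 1)) (bs (inord 2)).
Proof.
(* Indexing by nat makes the entries at the lifted ordinals below compute. *)
pose b (k : nat) := bs (inord k).
have -> : bs = [ffun i : 'I_3 => b i] by apply/ffunP => i; rewrite ffunE /b inord_val.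
rewrite /bd_gen raddf_sum.
under eq_bigr => i _ do rewrite raddfMz raddfB /= !theta_gen_basis.
rewrite !big_ord_recl big_ord0.
rewrite /theta_gen /del /face2 /coboundary3 /= !ffunE /= /bump /= !inordK //.
rewrite !(addn0, add0n, addn1) /br.
have signs (x0 x1 x2 : 'Z_p) :
    x0 *~ (-1) ^+ 1 + (x1 *~ (-1) ^+ 2 + (x2 *~ (-1) ^+ 3 + 0)) = - (x0 - x1 + x2).
  by rewrite !exprS expr0 !mulN1r opprK !mulrN1z mulr1z addr0 !opprD opprK addrA.
by rewrite signs.
Qed.

Hypothesis p_prime : prime p.

Lemma theta_gen_degenerate (g : gen_t p 2) : degenerate g -> theta_gen g = 0.
Proof.
case: g => a bs /existsP [i /existsP [j /andP [/eqP ji /eqP bij]]].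
have [i0 j1] : i = ord0 /\ j = ord_max.
  by split; apply/val_inj; move: (ltn_ord j); rewrite /= ji; lia.
by move: bij; rewrite i0 j1 /theta_gen /= => ->; rewrite theta_val_diag.
Qed.

Lemma theta_rho_gen (x : gen_t p 2 * 'I_2) : theta (rho_gen x) = 0.
Proof.
case: x => [[a bs] i]; rewrite raddfD /= !theta_gen_basis.
have [->|->] : i = ord0 \/ i = ord_max.
  by case: i => [[|[|n]] lt_i2] //; [left | right]; apply/val_inj.
all: rewrite /theta_gen /rho_tuple /= !ffunE /=.
  by rewrite theta_val_rho1 // addrN.
by rewrite theta_val_rho2 // addrN.
Qed.

Lemma theta_bd_gen (g : gen_t p 3) : theta (bd_gen g) = 0.
Proof. by case: g => a bs; rewrite theta_bd_gen3 coboundary3_theta_val // oppr0. Qed.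

End Chains.

Theorem lemma3p3 (p : nat) (hp : prime p) (hodd : odd p) :
  (forall a b c : int, (p%:Z %| num p a b c)%Z) /\
  (forall (a b c : int) (x y z : 'Z_p),
      a%:~R = x -> b%:~R = y -> c%:~R = z -> theta_int p a b c = theta_val x y z) /\
  (forall d1 d2 : chain p 2, inD d1 -> inDrho d2 -> theta (d1 + d2) = 0) /\
  (forall c : chain p 3, theta (bd c) = 0).
Proof.
split; first exact: num_dvdp.
split; first by move=> a b c x y z <- <- <-; rewrite theta_val_intr.
split.
  move=> d1 d2 D1 [k ->]; rewrite raddfD raddf_sum.
  rewrite big1 => [|x _]; last by rewrite raddfMz /= theta_rho_gen // mul0rz.
  rewrite addr0; apply: theta_eq0 => g /D1; exact: theta_gen_degenerate.
move=> c; rewrite /bd /= raddf_sum big1 // => g _.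
by rewrite raddfMz /= theta_bd_gen // mul0rz.
Qed.
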